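(* Let $X,Y,Z$ be complex Banach spaces, $\emptyset\ne I\subseteq\mathbb R^n$, let $\mathbb D\subseteq I$ be unbounded, let $\mathcal B$ be a non-empty collection of non-empty subsets of $X$ such that every $x\in X$ belongs to some $B\in\mathcal B$, and let $\mathrm R$ be a non-empty collection of sequences in $\mathbb R^n$ with $\mathbf t+\mathbf b(l)\in I$ whenever $\mathbf t\in I$, $\mathbf b\in\mathrm R$, $l\in\mathbb N$. Suppose $F_0:I\times X\to Y$ is $(\mathrm R,\mathcal B)$-multi-almost periodic, $Q_0\in C_{0,\mathbb D,\mathcal B}(I\times X:Y)$ and $F=F_0+Q_0$ on $I\times X$. Suppose $G_1:I\times Y\to Z$ is $(\mathrm R',\mathcal B')$-multi-almost periodic, where $\mathrm R'$ consists of all sequences from $\mathrm R$ and all their subsequences and $\mathcal B':=\{\bigcup_{\mathbf t\in I}F_0(\mathbf t;B):B\in\mathcal B\}$; $Q_1\in C_{0,\mathbb D,\mathcal B_1}(I\times Y:Z)$ with $\mathcal B_1:=\{\bigcup_{\mathbf t\in I}F(\mathbf t;B):B\in\mathcal B\}$; and $G=G_1+Q_1$ on $I\times Y$. If there exists $L>0$ with $\|G_1(\mathbf t;x)-G_1(\mathbf t;y)\|_Z\le L\|x-y\|_Y$ for all $\mathbf t\in I$, $x,y\in Y$, then $W(\mathbf t;x):=G(\mathbf t;F(\mathbf t;x))$ is $\mathbb D$-asymptotically $(\mathrm R,\mathcal B)$-multi-almost periodic.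
   Context: For Banach spaces $U,V$ and a collection $\mathcal C$ of subsets of $U$: $C_{0,\mathbb D,\mathcal C}(I\times U:V)$ is the space of continuous $Q:I\times U\to V$ such that for every $C\in\mathcal C$, $\lim_{\mathbf t\in\mathbb D,|\mathbf t|\to\infty}Q(\mathbf t;u)=0$ uniformly for $u\in C$. A continuous $H:I\times U\to V$ is $(\mathrm S,\mathcal C)$-multi-almost periodic (for a collection $\mathrm S$ of sequences in $\mathbb R^n$ with $\mathbf t+\mathbf b(l)\in I$ for $\mathbf t\in I$, $\mathbf b\in\mathrm S$) if for every $C\in\mathcal C$ and $(\mathbf b_k)\in\mathrm S$ there exist a subsequence $(\mathbf b_{k_l})$ and $H^\ast$ with $H(\mathbf t+\mathbf b_{k_l};u)\to H^\ast(\mathbf t;u)$ uniformly for $u\in C$, $\mathbf t\in I$. $W:I\times X\to Z$ is $\mathbb D$-asymptotically $(\mathrm R,\mathcal B)$-multi-almost periodic if $W=G'+Q'$ with $G'$ $(\mathrm R,\mathcal B)$-multi-almost periodic and $Q'\in C_{0,\mathbb D,\mathcal B}(I\times X:Z)$. *)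

(* Complex Banach spaces = completeNormedModType over
   the complex numbers R[i] (R : realType), time domain R^n = 'rV[R]_n. *)
From HB Require Import structures.
From mathcomp Require Import all_boot all_order all_algebra.
From mathcomp Require Import all_classical all_reals all_analysis.
From mathcomp Require Export complex.
Export Order.TTheory GRing.Theory Num.Theory.
Export numFieldNormedType.Exports.
Set Implicit Arguments.
Unset Strict Implicit.
Unset Printing Implicit Defensive.
Local Open Scope ring_scope.
Local Open Scope complex_scope.
Local Open Scope classical_set_scope.

Section Defs.
Variables (R : realType) (n : nat).

Definition cont_on (U V : normedModType R[i]) (I : set 'rV[R]_n)
  (Q : 'rV[R]_n -> U -> V) : Prop :=
  {within I `*` [set: U], continuous (fun p : 'rV[R]_n * U => Q p.1 p.2)}.

Definition C0DC (U V : normedModType R[i]) (I D : set 'rV[R]_n)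
  (C : set (set U)) (Q : 'rV[R]_n -> U -> V) : Prop :=
  cont_on I Q /\
  forall Cs, C Cs ->
    forall e : R, 0 < e -> exists M : R, forall t u, D t -> M < `|t| -> Cs u ->
      `|Q t u| < e%:C.

Definition multi_ap (U V : normedModType R[i]) (I : set 'rV[R]_n)
  (S : set (nat -> 'rV[R]_n)) (C : set (set U)) (H : 'rV[R]_n -> U -> V) : Prop :=
  cont_on I H /\
  forall Cs, C Cs -> forall b, S b ->
    exists (k : nat -> nat) (Hs : 'rV[R]_n -> U -> V),
      {homo k : i j / (i < j)%N} /\
      forall e : R, 0 < e -> exists N : nat, forall l, (N <= l)%N ->
        forall t u, I t -> Cs u -> `|H (t + b (k l)) u - Hs t u| < e%:C.

Definition asympt_multi_ap (U V : normedModType R[i]) (I D : set 'rV[R]_n)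
  (S : set (nat -> 'rV[R]_n)) (C : set (set U)) (W : 'rV[R]_n -> U -> V) : Prop :=
  exists (G' Q' : 'rV[R]_n -> U -> V),
    multi_ap I S C G' /\ C0DC I D C Q' /\
    forall t x, I t -> W t x = G' t x + Q' t x.

Definition subseq_closure (S : set (nat -> 'rV[R]_n)) : set (nat -> 'rV[R]_n) :=
  [set b | exists a (phi : nat -> nat), S a /\ {homo phi : i j / (i < j)%N} /\
     b = a \o phi].

Definition image_family (U V : Type) (I : set 'rV[R]_n) (F : 'rV[R]_n -> U -> V)
  (Bs : set (set U)) : set (set V) :=
  [set \bigcup_(t in I) (F t @` B) | B in Bs].
End Defs.

From HB Require Import structures.
From mathcomp Require Import all_boot all_order all_algebra.
From mathcomp Require Import all_classical all_reals all_analysis.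
From mathcomp Require Import complex.
Import Order.TTheory GRing.Theory Num.Theory.
Import numFieldNormedType.Exports.
Local Open Scope ring_scope.
Local Open Scope complex_scope.
Local Open Scope classical_set_scope.

(* Split W (t; x) as G1 (t; F0 (t; x)) plus the remainder
   [G1 (t; F (t; x)) - G1 (t; F0 (t; x))] + Q1 (t; F (t; x)).  The bracket is
   at most L |Q0 (t; x)|, so the remainder vanishes at infinity in D.  For the
   main part, given b in R and B in the family B, extract a subsequence along
   which F0 (. + b; .) converges uniformly on I x B, then a further one along
   which G1 (. + b; .) converges uniformly on I x (range of F0 on I x B); this
   is why G1 is assumed almost periodic for subsequences of R and on the
   family B'.  Along the second subsequence the composite is uniformly Cauchy,
   again by the Lipschitz bound, hence uniformly convergent since Z is
   complete. *)

Lemma cvg_within_comp (T U V : topologicalType) (A : set T) (B : set U)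
    (h : T -> U) (f : U -> V) (x : T) :
  (forall y, A y -> B (h y)) -> h @ within A (nbhs x) --> h x ->
  f @ within B (nbhs (h x)) --> f (h x) ->
  (f \o h) @ within A (nbhs x) --> f (h x).
Proof.
move=> AB hx fhx W /fhx /hx; rewrite /within /= !nbhs_simpl /=.
by apply: filterS => z Wz Az; exact: Wz Az (AB _ Az).
Qed.

Section MultiAlmostPeriodic.
Set Implicit Arguments.
Unset Strict Implicit.
Variables (R : realType) (n : nat).
Implicit Types (I D : set 'rV[R]_n) (e L : R).

Lemma gtc0_real (eps : R[i]) : 0 < eps -> exists2 e : R, 0 < e & eps = e%:C.
Proof. by case: eps => a b; rewrite ltcE /= => /andP[/eqP-> a0]; exists a. Qed.

Lemma normD_lt_half (V : normedModType R[i]) (x y : V) e :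
  `|x| < (e / 2)%:C -> `|y| < (e / 2)%:C -> `|x + y| < e%:C.
Proof.
move=> xe ye; rewrite (splitr e) rmorphD.
by apply: le_lt_trans (ler_normD _ _) _; exact: ltrD.
Qed.

Lemma lipschitz_lt (Y Z : normedModType R[i]) (h : Y -> Z) L e (x y : Y) :
  0 < L -> `|h x - h y| <= L%:C * `|x - y| -> `|x - y| < (e / L)%:C ->
  `|h x - h y| < e%:C.
Proof.
move=> L0 hxy xy; apply: le_lt_trans hxy _.
have -> : e%:C = L%:C * (e / L)%:C by rewrite -rmorphM mulrCA divff ?mulr1 ?gt_eqF.
by rewrite ltr_pM2l ?ltcR.
Qed.

Lemma cont_onP (U V : normedModType R[i]) I (Q : 'rV[R]_n -> U -> V) :
  cont_on I Q <-> forall p, (I `*` setT) p ->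
    (fun p => Q p.1 p.2) @ within (I `*` setT) (nbhs p) --> Q p.1 p.2.
Proof. exact: subspace_continuousP. Qed.

Lemma cont_on_comp (U V W : normedModType R[i]) I
    (A : 'rV[R]_n -> U -> V) (H : 'rV[R]_n -> V -> W) :
  cont_on I A -> cont_on I H -> cont_on I (fun t x => H t (A t x)).
Proof.
move=> /cont_onP cA /cont_onP cH; apply/cont_onP => -[t x] [It _] /=.
apply: (@cvg_within_comp _ _ _ _ (I `*` setT) (fun p => (p.1, A p.1 p.2))
                          (fun q => H q.1 q.2)).
- by move=> [s y] [Is _].
- have fst_t : fst @ within (I `*` setT) (nbhs (t, x)) --> t.
    exact: cvg_within_filter (@cvg_fst _ _ (nbhs t) (nbhs x) _).
  exact: cvg_pair fst_t (cA (t, x) (conj It Logic.I)).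
- exact: cH (t, A t x) (conj It Logic.I).
Qed.

Lemma cont_on_ext (U V : normedModType R[i]) I (A B : 'rV[R]_n -> U -> V) :
  cont_on I A -> (forall t x, I t -> B t x = A t x) -> cont_on I B.
Proof.
move=> /cont_onP cA AB; apply/cont_onP => -[t x] [It Tx] /=.
rewrite AB //; apply: cvg_trans (cA (t, x) (conj It Tx)).
by apply: fmap_within_eq => -[s y]; rewrite inE => -[Is _] /=; rewrite AB.
Qed.

Lemma cont_on_add (U V : normedModType R[i]) I (A B : 'rV[R]_n -> U -> V) :
  cont_on I A -> cont_on I B -> cont_on I (fun t x => A t x + B t x).
Proof.
move=> /cont_onP cA /cont_onP cB; apply/cont_onP => p Ip.
exact: cvgD (cA p Ip) (cB p Ip).
Qed.

Lemma cont_on_sub (U V : normedModType R[i]) I (A B : 'rV[R]_n -> U -> V) :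
  cont_on I A -> cont_on I B -> cont_on I (fun t x => A t x - B t x).
Proof.
move=> /cont_onP cA /cont_onP cB; apply/cont_onP => p Ip.
exact: cvgB (cA p Ip) (cB p Ip).
Qed.

Section UniformConvergence.
Variables (T : Type) (V : normedModType R[i]).
Implicit Types (A : set T) (f : nat -> T -> V).

Definition unif_cvg_on A f (g : T -> V) : Prop :=
  forall e, 0 < e -> exists N, forall l, (N <= l)%N ->
    forall x, A x -> `|f l x - g x| < e%:C.

Definition unif_cauchy_on A f : Prop :=
  forall e, 0 < e -> exists N, forall l l', (N <= l)%N -> (N <= l')%N ->
    forall x, A x -> `|f l x - f l' x| < e%:C.

Lemma unif_cvg_on_cauchy A f g : unif_cvg_on A f g -> unif_cauchy_on A f.
Proof.
move=> fg e e0; have [N fgN] := fg _ (divr_gt0 e0 (ltr0Sn _ 1)).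
exists N => l l' Nl Nl' x Ax; rewrite -(subrKA (g x)).
by apply: normD_lt_half; [exact: fgN | rewrite distrC; exact: fgN].
Qed.

Lemma unif_cauchy_on_sub A f (k : nat -> nat) :
  {homo k : i j / (i < j)%N} -> unif_cauchy_on A f -> unif_cauchy_on A (f \o k).
Proof.
move=> /leq_mono/unstable.mono_leq_infl k_ge fC e /fC[N fN].
by exists N => l l' Nl Nl'; apply: fN; [exact: leq_trans Nl (k_ge l)
                                       |exact: leq_trans Nl' (k_ge l')].
Qed.
End UniformConvergence.

Lemma unif_cauchy_on_cvg (T : Type) (V : completeNormedModType R[i])
    (A : set T) (f : nat -> T -> V) :
  unif_cauchy_on A f -> unif_cvg_on A f (fun x => lim (f^~ x @ \oo)).
Proof.
move=> fC.
have fx_cvg x : A x -> cvg (f^~ x @ \oo).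
  move=> Ax; apply/cauchy_cvgP/cauchy_exP => _ /gtc0_real[e e0 ->].
  have [N fN] := fC e e0; exists (f N x), N => // l /= Nl.
  by rewrite -ball_normE /=; exact: fN.
move=> e e0; have [N fN] := fC _ (divr_gt0 e0 (ltr0Sn _ 1)).
exists N => l Nl x Ax.
have /cvgrPdist_lt/(_ (e / 2)%:C) := fx_cvg x Ax.
rewrite ltcR => /(_ (divr_gt0 e0 (ltr0Sn _ 1))) [m _ fm].
rewrite -(subrKA (f (maxn N m) x)); apply: normD_lt_half.
- exact: fN (leq_maxl _ _) _ _.
- by rewrite distrC; exact: fm (leq_maxr _ _).
Qed.

Lemma multi_ap_cauchy (U V : normedModType R[i]) I
    (S : set (nat -> 'rV[R]_n)) (C : set (set U)) (H : 'rV[R]_n -> U -> V) :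
  multi_ap I S C H -> forall Cs, C Cs -> forall b, S b ->
  exists2 k : nat -> nat, {homo k : i j / (i < j)%N} &
    unif_cauchy_on (I `*` Cs) (fun l p => H (p.1 + b (k l)) p.2).
Proof.
move=> [_ apH] Cs Cs_C b Sb; have [k [Hs [hk kH]]] := apH Cs Cs_C b Sb.
exists k => //; apply: (@unif_cvg_on_cauchy _ _ _ _ (fun p => Hs p.1 p.2)).
by move=> e /kH[N HN]; exists N => l Nl [t u] [It Csu]; exact: HN.
Qed.

Lemma multi_ap_of_cauchy (U : normedModType R[i]) (V : completeNormedModType R[i])
    I (S : set (nat -> 'rV[R]_n)) (C : set (set U)) (H : 'rV[R]_n -> U -> V) :
  cont_on I H ->
  (forall Cs, C Cs -> forall b, S b ->
    exists2 k : nat -> nat, {homo k : i j / (i < j)%N} &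
      unif_cauchy_on (I `*` Cs) (fun l p => H (p.1 + b (k l)) p.2)) ->
  multi_ap I S C H.
Proof.
move=> cH apH; split=> // Cs Cs_C b Sb.
have [k hk /unif_cauchy_on_cvg kH] := apH Cs Cs_C b Sb.
exists k, (fun t u => lim ((fun l => H (t + b (k l)) u) @ \oo)).
by split=> // e /kH[N HN]; exists N => l Nl t u It Csu; exact: (HN l Nl (t, u)).
Qed.

Lemma multi_ap_comp_lipschitz (X Y : normedModType R[i])
    (Z : completeNormedModType R[i]) I (Bs : set (set X))
    (Rs : set (nat -> 'rV[R]_n)) (F0 : 'rV[R]_n -> X -> Y)
    (G1 : 'rV[R]_n -> Y -> Z) L :
  0 < L -> (forall t (x y : Y), I t -> `|G1 t x - G1 t y| <= L%:C * `|x - y|) ->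
  (forall t b l, I t -> Rs b -> I (t + b l)) ->
  multi_ap I Rs Bs F0 -> multi_ap I (subseq_closure Rs) (image_family I F0 Bs) G1 ->
  multi_ap I Rs Bs (fun t x => G1 t (F0 t x)).
Proof.
move=> L0 Lip IR apF0 apG1; apply: multi_ap_of_cauchy.
  exact: cont_on_comp apF0.1 apG1.1.
move=> B BsB b Rb.
have [k1 hk1 F0C] := multi_ap_cauchy apF0 BsB Rb.
have Rbk1 : subseq_closure Rs (b \o k1) by exists b, k1.
have imB : image_family I F0 Bs (\bigcup_(s in I) (F0 s @` B)) by exists B.
have [k2 hk2 G1C] := multi_ap_cauchy apG1 imB Rbk1.
have {}F0C := unif_cauchy_on_sub hk2 F0C.
exists (k1 \o k2) => [i j ij|e e0]; first exact/hk1/hk2.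
have [N1 F0N] := F0C _ (divr_gt0 (divr_gt0 e0 (ltr0Sn _ 1)) L0).
have [N2 G1N] := G1C _ (divr_gt0 e0 (ltr0Sn _ 1)).
exists (maxn N1 N2) => l l' /[!geq_max] /andP[N1l N2l] /andP[N1l' N2l'].
move=> [t u] [It Bu] /=.
set s := t + b (k1 (k2 l)); set s' := t + b (k1 (k2 l')).
rewrite -(subrKA (G1 s (F0 s' u))); apply: normD_lt_half.
- apply: lipschitz_lt L0 (Lip _ _ _ (IR _ _ _ It Rb)) _.
  exact: (F0N l l' N1l N1l' (t, u)).
- apply: (G1N l l' N2l N2l' (t, F0 s' u)); split=> //.
  by exists s'; [exact: IR | exists u].
Qed.

Lemma C0DC_add (U V : normedModType R[i]) I D (C : set (set U))
    (A B : 'rV[R]_n -> U -> V) :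
  C0DC I D C A -> C0DC I D C B -> C0DC I D C (fun t x => A t x + B t x).
Proof.
move=> [cA A0] [cB B0]; split; first exact: cont_on_add.
move=> Cs Cs_C e e0; have e20 : 0 < e / 2 by rewrite divr_gt0.
have [MA HA] := A0 Cs Cs_C _ e20; have [MB HB] := B0 Cs Cs_C _ e20.
exists (Num.max MA MB) => t u Dt; rewrite gt_max => /andP[MAt MBt] Csu.
by apply: normD_lt_half; [exact: HA | exact: HB].
Qed.

Lemma C0DC_comp (U V W : normedModType R[i]) I D (Bs : set (set U))
    (F : 'rV[R]_n -> U -> V) (Q : 'rV[R]_n -> V -> W) :
  D `<=` I -> cont_on I F -> C0DC I D (image_family I F Bs) Q ->
  C0DC I D Bs (fun t x => Q t (F t x)).
Proof.
move=> DI cF [cQ Q0]; split; first exact: cont_on_comp.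
move=> B BsB e e0.
have imB : image_family I F Bs (\bigcup_(s in I) (F s @` B)) by exists B.
have [M HM] := Q0 _ imB e e0.
by exists M => t u Dt Mt Bu; apply: HM => //; exists t; [exact: DI | exists u].
Qed.

Lemma C0DC_lipschitz_incr (U V W : normedModType R[i]) I D (C : set (set U))
    (A Q : 'rV[R]_n -> U -> V) (H : 'rV[R]_n -> V -> W) L :
  D `<=` I -> 0 < L ->
  (forall t (x y : V), I t -> `|H t x - H t y| <= L%:C * `|x - y|) ->
  cont_on I A -> cont_on I H -> C0DC I D C Q ->
  C0DC I D C (fun t x => H t (A t x + Q t x) - H t (A t x)).
Proof.
move=> DI L0 Lip cA cH [cQ Q0]; split.
  by apply: cont_on_sub; apply: cont_on_comp => //; exact: cont_on_add.
move=> Cs Cs_C e e0; have [M HM] := Q0 Cs Cs_C _ (divr_gt0 e0 L0).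
exists M => t u Dt Mt Csu; apply: lipschitz_lt L0 (Lip _ _ _ (DI _ Dt)) _.
by rewrite addrAC subrr add0r; exact: HM.
Qed.

End MultiAlmostPeriodic.

Theorem theorem2p48 (R : realType) (n : nat)
  (X Y Z : completeNormedModType R[i])
  (I D : set 'rV[R]_n) (Bs : set (set X)) (Rs : set (nat -> 'rV[R]_n))
  (F F0 Q0 : 'rV[R]_n -> X -> Y) (G G1 Q1 : 'rV[R]_n -> Y -> Z) :
  I !=set0 ->
  D `<=` I ->
  (forall M : R, exists t, D t /\ M < `|t|) ->
  Bs !=set0 ->
  (forall B, Bs B -> B !=set0) ->
  (forall x : X, exists B, Bs B /\ B x) ->
  Rs !=set0 ->
  (forall t b l, I t -> Rs b -> I (t + b l)) ->
  multi_ap I Rs Bs F0 ->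
  C0DC I D Bs Q0 ->
  (forall t x, I t -> F t x = F0 t x + Q0 t x) ->
  multi_ap I (subseq_closure Rs) (image_family I F0 Bs) G1 ->
  C0DC I D (image_family I F Bs) Q1 ->
  (forall t y, I t -> G t y = G1 t y + Q1 t y) ->
  (exists L : R, 0 < L /\
     forall t (x y : Y), I t -> `|G1 t x - G1 t y| <= L%:C * `|x - y|) ->
  asympt_multi_ap I D Rs Bs (fun t x => G t (F t x)).
Proof.
move=> _ DI _ _ _ _ _ IR apF0 Q0_C0 eF apG1 Q1_C0 eG [L [L0 Lip]].
have cF : cont_on I F := cont_on_ext (cont_on_add apF0.1 Q0_C0.1) eF.
exists (fun t x => G1 t (F0 t x)),
  (fun t x => (G1 t (F0 t x + Q0 t x) - G1 t (F0 t x)) + Q1 t (F t x)).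
split; first exact: multi_ap_comp_lipschitz L0 Lip IR apF0 apG1.
split; first apply: C0DC_add.
- exact: C0DC_lipschitz_incr DI L0 Lip apF0.1 apG1.1 Q0_C0.
- exact: C0DC_comp DI cF Q1_C0.
by move=> t x It; rewrite eG // -eF // addrA addrCA subrr addr0.
Qed.
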